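(* Let $k\ge3$ be odd, $0\le p\le p_k^\star$ and $\eta>0$. There exists $\varepsilon'=\varepsilon'(p,k,\eta)>0$ such that for every finite graph $G=(V,E)$ without isolated vertices, every round $t$, every configuration $\bar{\mathbf x}$ with $\phi^{(t)}_{\max}\le\varphi^-_{p,k}-\eta$, and every $u\in V$, under the $(k,p,\mathcal B)$-Edge-Majority dynamics, $$\mathbb E\big[\phi_u^{(t+1)}\mid\mathbf X^{(t)}=\bar{\mathbf x}\big]\le(1-\varepsilon')\,\phi^{(t)}_{\max}.$$
   Context: $N(u)$ neighbourhood of $u$, $\delta_u=|N(u)|$. States in $\{\mathcal R,\mathcal B\}$; $\mathbf X^{(t)}$ is the configuration at round $t$, $R^{(t)}$ the $\mathcal R$ nodes, $\phi_u^{(t)}=|N(u)\cap R^{(t)}|/\delta_u$, $\phi^{(t)}_{\max}=\max_u\phi_u^{(t)}$. $(k,p,\mathcal B)$-Edge-Majority: in each round every node $u$ independently samples $k$ neighbours uniformly with replacement; for each sampled $v$, independently, $u$ sees $v$ as $\mathcal B$ with probability $p$ and otherwise sees $v$'s true current state; $u$'s next state is the state seen more often. $F_{p,k}(x)=\Pr[\mathrm{Bin}(k,(1-p)x)\ge(k+1)/2]$. $p_k^\star\in[1/9,1/2)$ is the (unique) value such that for $0\le p<p_k^\star$, $F_{p,k}(x)=x$ on $[0,1]$ has exactly three solutions $0<\varphi^-_{p,k}<\varphi^+_{p,k}$; for $p=p_k^\star$ exactly two, $0$ and $\varphi_{p,k}$, and then $\varphi^-_{p,k}:=\varphi_{p,k}$;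 for $p>p_k^\star$ only $0$. *)

From HB Require Import structures.
From mathcomp Require Import all_boot all_order all_algebra.
From mathcomp Require Import boolp classical_sets reals.
Set Implicit Arguments. Unset Strict Implicit. Unset Printing Implicit Defensive.
Import Order.TTheory GRing.Theory Num.Theory.
Local Open Scope ring_scope.
Local Open Scope classical_set_scope.

Section EdgeMajority.
Variable R : realType.

Definition Fpk (p : R) (k : nat) (x : R) : R :=
  let q := (1 - p) * x in
  \sum_(j < k.+1 | ((k.+1)./2 <= j)%N) ('C(k, j))%:R * q ^+ j * (1 - q) ^+ (k - j).

Definition pstar (k : nat) : R :=
  sup [set p : R | 0 <= p <= 1 /\ exists x : R, 0 < x <= 1 /\ Fpk p k x = x].

Definition phiminus (p : R) (k : nat) : R :=
  inf [set x : R | 0 < x <= 1 /\ Fpk p k x = x].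

Variable V : finType.
Variable e : rel V.

Definition nbhd (u : V) : {set V} := [set v | e u v].
Definition deg (u : V) : nat := #|nbhd u|.

(* phi_u of a configuration x (true = R, false = B) *)
Definition phi (x : V -> bool) (u : V) : R :=
  (#|[set v in nbhd u | x v]|)%:R / (deg u)%:R.

Definition phimax (x : V -> bool) : R := \big[Num.max/0]_(u : V) phi x u.

(* One sample of node v: a neighbour w (uniform) together with a noise bit b
   (b = true with probability p: the sample is seen as B). *)
Definition sample_weight (p : R) (v : V) (s : V * bool) : R :=
  (if e v s.1 then ((deg v)%:R)^-1 else 0) * (if s.2 then p else 1 - p).

Definition seen_R (x : V -> bool) (s : V * bool) : bool := ~~ s.2 && x s.1.

(* Probability that v is R in the next round, from the k independent samples:
   v adopts R iff R is seen more often than B (k odd). *)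
Definition prob_next_R (p : R) (k : nat) (x : V -> bool) (v : V) : R :=
  \sum_(s : {ffun 'I_k -> V * bool})
     (\prod_(i < k) sample_weight p v (s i)) *
     (if (k < 2 * #|[set i | seen_R x (s i)]|)%N then 1 else 0).

Definition prob_next_config (p : R) (k : nat) (x : V -> bool)
    (y : {ffun V -> bool}) : R :=
  \prod_(v : V) (if y v then prob_next_R p k x v else 1 - prob_next_R p k x v).

Definition exp_next_phi (p : R) (k : nat) (x : V -> bool) (u : V) : R :=
  \sum_(y : {ffun V -> bool}) prob_next_config p k x y * phi y u.

End EdgeMajority.

From HB Require Import structures.
From mathcomp Require Import all_boot all_order all_algebra.
From mathcomp Require Import boolp classical_sets reals.
From mathcomp Require Import topology normedtype derive.
From mathcomp Require Import lra zify ring.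
Set Implicit Arguments. Unset Strict Implicit. Unset Printing Implicit Defensive.
Import Order.TTheory GRing.Theory Num.Theory numFieldNormedType.Exports.
Local Open Scope ring_scope.

(* Given X^(t), the nodes update independently, so E[phi_u^(t+1)] is the mean, over the
   neighbours w of u, of the probability that w turns R.  The number of R's seen by w is
   Bin(k, (1-p) phi_w), so that probability is F_{p,k}(phi_w).  Write F(x) = x G(x) with
   G a polynomial; G(0) = 0 as k >= 3, and G(y) <> 1 for 0 < y < phi^-, the least positive
   fixed point of F.  By the intermediate value and extreme value theorems G stays below
   1 - eps on [0, phi^- - eta], whence F(phi_w) <= (1 - eps) phi_w <= (1 - eps) phi_max. *)

Section BigSums.
Variable R : comNzRingType.

Lemma sum_set_card (k : nat) (f : nat -> R) :
  \sum_(A : {set 'I_k}) f #|A| = \sum_(j < k.+1) 'C(k, j)%:R * f j.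
Proof.
transitivity (\sum_(A : {set 'I_k}) \sum_(j < k.+1 | #|A| == j) f j).
  apply: eq_bigr => A _.
  have cardA : (#|A| < k.+1)%N by rewrite ltnS -[X in (_ <= X)%N]card_ord max_card.
  by rewrite (big_pred1 (Ordinal cardA)) // => j; rewrite eq_sym -val_eqE.
rewrite (exchange_big_dep xpredT) //=; apply: eq_bigr => j _.
rewrite (eq_bigl (fun A => A \in [set A : {set 'I_k} | #|A| == j])) => [|A]; last first.
  by rewrite inE.
by rewrite sumr_const card_draws card_ord mulr_natl.
Qed.

Lemma sum_ffun_count_binomial (k : nat) (T : finType) (w : T -> R) (P : pred T)
    (Q : pred nat) :
  \sum_(s : {ffun 'I_k -> T})
     (\prod_(i < k) w (s i)) * (if Q #|[set i | P (s i)]| then 1 else 0)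
  = \sum_(j < k.+1 | Q j) 'C(k, j)%:R * (\sum_t w t * (P t)%:R) ^+ j
                                   * (\sum_t w t * (~~ P t)%:R) ^+ (k - j).
Proof.
set a := \sum_t w t * (P t)%:R; set b := \sum_t w t * (~~ P t)%:R.
pose wA (A : {set 'I_k}) (i : 'I_k) (t : T) := w t * (P t == (i \in A))%:R.
have split_by_set (s : {ffun 'I_k -> T}) :
    (\prod_(i < k) w (s i)) * (if Q #|[set i | P (s i)]| then 1 else 0)
    = \sum_(A : {set 'I_k}) (if Q #|A| then 1 else 0) * \prod_(i < k) wA A i (s i).
  rewrite (bigD1 [set i | P (s i)]) //= [X in _ = _ + X]big1 ?addr0.
    by rewrite mulrC; congr (_ * _); apply: eq_bigr => i _; rewrite /wA inE eqxx mulr1.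
  move=> A /eqP neqA; rewrite (_ : \prod_i _ = 0) ?mulr0 //.
  have [i Pi] : exists i, P (s i) != (i \in A).
    apply/existsP; apply: contra_notT neqA => /existsPn eqPA.
    by apply/setP => i; rewrite inE; have:= eqPA i; rewrite negbK => /eqP.
  by rewrite (bigD1 i) //= /wA (negbTE Pi) mulr0 mul0r.
have prod_wA A : \sum_(s : {ffun 'I_k -> T}) \prod_(i < k) wA A i (s i)
    = a ^+ #|A| * b ^+ (k - #|A|).
  rewrite -(bigA_distr_bigA (wA A)) (bigID (fun i => i \in A)) /=.
  rewrite (eq_bigr (fun=> a)) => [|i iA]; last by apply: eq_bigr => t _; rewrite /wA iA eqb_id.
  rewrite [X in _ * X](eq_bigr (fun=> b)) => [|i iA]; last first.
    by apply: eq_bigr => t _; rewrite /wA (negbTE iA) eqbF_neg.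
  rewrite !prodr_const; congr (a ^+ _ * b ^+ _).
  have := cardC A; rewrite card_ord (@eq_card _ [predC A] (fun i => i \notin A)) //.
  by move=> /(congr1 (subn^~ #|A|)); rewrite addKn.
under eq_bigr do rewrite split_by_set.
rewrite exchange_big /=.
under eq_bigr do rewrite -mulr_sumr prod_wA.
rewrite (sum_set_card k (fun j => (if Q j then 1 else 0) * (a ^+ j * b ^+ (k - j)))).
rewrite [RHS]big_mkcond /=; apply: eq_bigr => j _.
by case: (Q j); rewrite ?mul1r ?mul0r ?mulr0 ?mulrA.
Qed.

Lemma sum_prod_ffun_indicator (V : finType) (f : V -> R) (w : V) :
  \sum_(y : {ffun V -> bool}) (\prod_(v : V) (if y v then f v else 1 - f v)) *
     (if y w then 1 else 0) = f w.
Proof.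
pose g v (b : bool) := (if b then f v else 1 - f v) * (if v == w then b%:R else 1).
transitivity (\sum_(y : {ffun V -> bool}) \prod_(v : V) g v (y v)).
  apply: eq_bigr => y _; rewrite big_split /= -big_mkcond big_pred1_eq.
  by case: (y w); rewrite ?mulr1 ?mulr0.
rewrite -(bigA_distr_bigA g) (bigD1 w) //= [X in _ * X]big1 ?mulr1.
  by rewrite big_bool /g /= eqxx mulr1 mulr0 addr0.
by move=> v /negbTE nvw; rewrite big_bool /g /= nvw !mulr1 addrC subrK.
Qed.

Lemma natr_card (T : finType) (A : pred T) :
  #|A|%:R = \sum_(t : T) (if t \in A then 1 else 0 : R).
Proof. by rewrite -big_mkcond /= sumr_const. Qed.

Lemma sumr_pair_bool (T : finType) (F : T * bool -> R) :
  \sum_s F s = \sum_t (F (t, true) + F (t, false)).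
Proof.
under [RHS]eq_bigr => t _ do rewrite -(big_bool _ (fun b => F (t, b))).
by rewrite pair_bigA; apply: eq_bigr => -[].
Qed.

End BigSums.

Section Contraction.
Local Open Scope classical_set_scope.
Local Open Scope ring_scope.
Variable R : realType.
Implicit Types (p x : R) (k : nat).

Lemma continuous_itv_lt_uniform (f : R -> R) (a b t : R) :
  a <= b -> {within `[a, b], continuous f} -> f a < t ->
  (forall y, a < y <= b -> f y != t) ->
  exists2 eps, 0 < eps & forall x, x \in `[a, b] -> f x <= t - eps.
Proof.
move=> le_ab cf fa_lt_t f_neq_t.
have [m m_ab f_le_fm] := EVT_max le_ab cf.
move: (m_ab); rewrite in_itv /= => /andP[le_am le_mb].
have fm_lt_t : f m < t.
  rewrite ltNge; apply/negP => t_le_fm.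
  have cf_am : {within `[a, m], continuous f}.
    apply: continuous_subspaceW cf; apply: subset_itvl; by rewrite bnd_simp.
  have [|y y_am fy_t] := @IVT R f a m t le_am cf_am.
    by rewrite ge_min le_max (ltW fa_lt_t) t_le_fm orbT.
  move: y_am; rewrite in_itv /= => /andP[le_ay le_ym].
  have lt_ay : a < y.
    by rewrite lt_neqAle le_ay andbT; apply: contra_eqN fy_t => /eqP <-; rewrite lt_eqF.
  by move: (f_neq_t y); rewrite lt_ay (le_trans le_ym le_mb) fy_t eqxx => /(_ isT).
exists (t - f m); first by rewrite subr_gt0.
by move=> x x_ab; rewrite subKr; exact: f_le_fm.
Qed.

Definition Gpk p k : {poly R} :=
  \sum_(j < k.+1 | ((k.+1)./2 <= j)%N)
     ('C(k, j)%:R * (1 - p) ^+ j) *: ('X^(j.-1) * (1 - (1 - p) *: 'X) ^+ (k - j)).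

Lemma hornerGpk p k x : (Gpk p k).[x] = \sum_(j < k.+1 | ((k.+1)./2 <= j)%N)
  'C(k, j)%:R * (1 - p) ^+ j * (x ^+ j.-1 * (1 - (1 - p) * x) ^+ (k - j)).
Proof. by rewrite horner_sum; apply: eq_bigr => j _; rewrite !hornerE. Qed.

Lemma Fpk_mulGpk p k x : (0 < k)%N -> Fpk p k x = x * (Gpk p k).[x].
Proof.
move=> k_gt0; rewrite hornerGpk /Fpk mulr_sumr; apply: eq_bigr => j le_half_j.
have j_gt0 : (0 < j)%N.
  by apply: leq_trans le_half_j; have := odd_double_half k; rewrite /= uphalf_half; lia.
by rewrite -(prednK j_gt0) succnK !exprS exprMn; ring.
Qed.

Lemma Gpk0 p k : (3 <= k)%N -> (Gpk p k).[0] = 0.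
Proof.
move=> k_ge3; rewrite hornerGpk big1 // => j le_half_j.
have j_ge2 : (2 <= j)%N.
  by apply: leq_trans le_half_j; have := odd_double_half k; rewrite /= uphalf_half; lia.
by rewrite expr0n -subn1 subn_eq0 leqNgt (leq_trans _ j_ge2) // mul0r mulr0.
Qed.

Lemma phiminus_le_fixpoint p k y : 0 < y <= 1 -> Fpk p k y = y -> phiminus p k <= y.
Proof.
move=> y01 Fy; apply: ge_inf; last by split.
by exists 0 => z [/andP[z_gt0 _] _]; exact: ltW.
Qed.

Lemma Fpk_contraction p k c : (3 <= k)%N -> c < phiminus p k ->
  exists2 eps : R, 0 < eps <= 1 &
    forall x, 0 <= x <= c -> x <= 1 -> Fpk p k x <= (1 - eps) * x.
Proof.
move=> k_ge3 c_lt; set b := Num.min c 1.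
have [b_lt0|b_ge0] := ltP b 0.
  exists 1 => [|x /andP[x_ge0 x_le_c] x_le1]; first by rewrite ltr01 lexx.
  have : x <= b by rewrite le_min x_le_c.
  lra.
have cG : {within `[0, b], continuous (horner (Gpk p k))}.
  exact/continuous_subspaceT/continuous_horner.
have G_neq1 y : 0 < y <= b -> (Gpk p k).[y] != 1.
  case/andP=> y_gt0 y_le_b; apply/eqP => Gy1.
  have : phiminus p k <= y.
    apply: phiminus_le_fixpoint; first by rewrite y_gt0 (le_trans y_le_b) // ge_min lexx orbT.
    by rewrite Fpk_mulGpk ?Gy1 ?mulr1 //; lia.
  have : y <= c by rewrite (le_trans y_le_b) // ge_min lexx.
  lra.
have G0_lt1 : (Gpk p k).[0] < 1 by rewrite Gpk0 // ltr01.
have [eps eps_gt0 G_le] := continuous_itv_lt_uniform b_ge0 cG G0_lt1 G_neq1.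
exists (Num.min eps 1) => [|x /andP[x_ge0 x_le_c] x_le1].
  by rewrite lt_min eps_gt0 ltr01 ge_min lexx orbT.
rewrite Fpk_mulGpk 1?mulrC; last lia.
apply: ler_wpM2r => //; apply: (le_trans (G_le x _)).
  by rewrite in_itv /= x_ge0 le_min x_le_c.
by apply: lerB => //; rewrite ge_min lexx.
Qed.

End Contraction.

Lemma odd_ltn_double k j : odd k -> (k < 2 * j)%N = ((k.+1)./2 <= j)%N.
Proof. by move=> odd_k; have := odd_double_half k; rewrite odd_k /= uphalf_half odd_k; lia. Qed.

Section EdgeMajority.
Variables (R : realType) (V : finType) (e : rel V).
Implicit Types (p : R) (k : nat) (x : V -> bool) (u v : V).

Lemma phiE x u :
  phi R e x u = (deg e u)%:R^-1 * \sum_(w in nbhd e u) (if x w then 1 else 0).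
Proof.
rewrite /phi natr_card mulrC [in RHS]big_mkcond /=; congr (_ * _).
by apply: eq_bigr => w _; rewrite inE; case: (w \in nbhd e u).
Qed.

Lemma phi_ge0 x u : 0 <= phi R e x u.
Proof. by rewrite /phi divr_ge0. Qed.

Lemma phi_le1 x u : phi R e x u <= 1.
Proof.
rewrite /phi; have [->|deg_gt0] := posnP (deg e u); first by rewrite invr0 mulr0.
rewrite ler_pdivrMr ?ltr0n // mul1r ler_nat.
by apply: subset_leq_card; apply/fintype.subsetP => w; rewrite inE => /andP[].
Qed.

Lemma phi_le_phimax x u : phi R e x u <= phimax R e x.
Proof. exact: le_bigmax. Qed.

Lemma exp_next_phiE p k x u :
  exp_next_phi e p k x u = (deg e u)%:R^-1 * \sum_(w in nbhd e u) prob_next_R e p k x w.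
Proof.
rewrite /exp_next_phi; under eq_bigr do rewrite phiE mulrCA mulr_sumr.
rewrite -mulr_sumr exchange_big /=; congr (_ * _); apply: eq_bigr => w _.
exact: sum_prod_ffun_indicator.
Qed.

Lemma sum_sample_weight_seen_R p x v :
  \sum_s sample_weight e p v s * (seen_R x s)%:R = (1 - p) * phi R e x v.
Proof.
rewrite phiE mulrCA !mulr_sumr [in RHS]big_mkcond sumr_pair_bool /=.
apply: eq_bigr => w _; rewrite /sample_weight /seen_R inE /=.
by case: (e v w); case: (x w); rewrite /= ?mulr0 ?mul0r ?mulr1 ?add0r ?addr0.
Qed.

Lemma sum_sample_weight p v : (0 < deg e v)%N -> \sum_s sample_weight e p v s = 1.
Proof.
move=> deg_gt0; rewrite sumr_pair_bool.
under eq_bigr do rewrite /sample_weight /= -mulrDr addrC subrK mulr1.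
rewrite -big_mkcond sumr_const.
have -> : #|e v| = deg e v by apply: eq_card => w; rewrite inE.
by rewrite -[_ *+ _]mulr_natr mulVf // pnatr_eq0 -lt0n.
Qed.

Lemma prob_next_RE p k x v : (0 < deg e v)%N -> odd k ->
  prob_next_R e p k x v = Fpk p k (phi R e x v).
Proof.
move=> deg_gt0 odd_k.
(* [prob_next_R] is defined under [classical_set_scope], so it counts a classical set. *)
have card_seen (s : {ffun 'I_k -> V * bool}) :
    #|[set i | is_true (seen_R x (s i))]%classic| = #|[set i | seen_R x (s i)]|.
  by apply: eq_card => i; rewrite finset.inE unfold_in /in_set /= asboolb.
rewrite /prob_next_R; under eq_bigr do rewrite card_seen.
rewrite (sum_ffun_count_binomial _ _ _ (fun n => (k < 2 * n)%N)).
have sum_seen_B : \sum_s sample_weight e p v s * (~~ seen_R x s)%:R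
    = 1 - (1 - p) * phi R e x v.
  have total : \sum_s sample_weight e p v s * (seen_R x s)%:R
      + \sum_s sample_weight e p v s * (~~ seen_R x s)%:R = 1.
    rewrite -big_split -[RHS](sum_sample_weight p deg_gt0) /=; apply: eq_bigr => s _.
    by case: seen_R; rewrite /= mulr1 mulr0 ?addr0 ?add0r.
  by rewrite -sum_sample_weight_seen_R -[X in _ = X - _]total addrAC subrr add0r.
rewrite sum_sample_weight_seen_R sum_seen_B.
by apply: eq_bigl => j; rewrite odd_ltn_double.
Qed.

End EdgeMajority.

Theorem lemma5p13 (R : realType) (k : nat) (p eta : R) :
  (3 <= k)%N -> odd k ->
  0 <= p -> p <= pstar R k -> 0 < eta ->
  exists eps' : R, 0 < eps' /\
    forall (V : finType) (e : rel V),
      symmetric e -> irreflexive e ->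
      (forall u : V, exists v : V, e u v) ->
      forall (x : V -> bool),
        phimax R e x <= phiminus p k - eta ->
        forall u : V,
          exp_next_phi e p k x u <= (1 - eps') * phimax R e x.
Proof.
move=> k_ge3 odd_k _ _ eta_gt0.
have c_lt : phiminus p k - eta < phiminus p k by rewrite ltrBlDr ltrDl.
have [eps /andP[eps_gt0 eps_le1] Fpk_le] := Fpk_contraction k_ge3 c_lt.
exists eps; split => // V e _ _ has_nbr x phimax_le u.
have deg_gt0 w : (0 < deg e w)%N.
  by have [v e_wv] := has_nbr w; apply/card_gt0P; exists v; rewrite inE.
have prob_le w : prob_next_R e p k x w <= (1 - eps) * phimax R e x.
  have phi_w_range : 0 <= phi R e x w <= phiminus p k - eta.
    by rewrite phi_ge0 (le_trans (phi_le_phimax R e x w)).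
  rewrite prob_next_RE //; apply: le_trans (Fpk_le _ phi_w_range (phi_le1 R e x w)) _.
  by rewrite ler_wpM2l ?subr_ge0 ?phi_le_phimax.
rewrite exp_next_phiE; apply: le_trans (ler_wpM2l _ (ler_sum _ (fun w _ => prob_le w))) _.
  by rewrite invr_ge0.
by rewrite sumr_const -[_ *+ #|_|]mulr_natl mulrA mulVf ?mul1r // pnatr_eq0 -lt0n.
Qed.
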